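(* Let $\mathcal{G}=(\mathcal{V},E)$ be an undirected graph, $\mathcal{V}=\{1,\dots,N\}$, let $X=(X_1,\dots,X_N)$ be a Markov random field on $\mathcal{G}$ with $X_i$ taking values in a finite alphabet $\mathcal{X}_i$, let $g_i:\mathcal{X}_i\to\mathcal{Y}_i$ be functions, and $Y_i=g_i(X_i)$, $Y=(Y_1,\dots,Y_N)$. (i) If $H(Y)=H(X)$, then $H(X_i\mid Y_i,X_{\mathcal{N}_i})=0$ for every $i\in\mathcal{V}$. (ii) If $\mathcal{G}$ is chordal and there exists a permutation $v_1,\dots,v_N$ of $\mathcal{V}$ such that, with $A_{v_i}=\mathcal{N}_{v_i}\cap\{v_1,\dots,v_{i-1}\}$, one has $H(X_{v_i}\mid Y_{v_i},X_{A_{v_i}})=0$ for every $i=1,\dots,N$, then $H(Y)=H(X)$.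
   Context: $\mathcal{N}_i$ is the set of neighbors of $i$ in $\mathcal{G}$; $X_A=(X_j,j\in A)$. $X$ is a Markov random field on $\mathcal{G}$ if for every $i$, $p_{X_i|X_{\mathcal{V}\setminus\{i\}}}=p_{X_i|X_{\mathcal{N}_i}}$. A graph is chordal if every induced cycle has length three. $H$ denotes Shannon (conditional) entropy. No positivity of $p_X$ is assumed. *)

From mathcomp Require Import all_boot all_order all_algebra.
From mathcomp Require Import reals exp.
Set Implicit Arguments. Unset Strict Implicit. Unset Printing Implicit Defensive.
Import Order.TTheory GRing.Theory Num.Theory.
Local Open Scope ring_scope.

Section Info.
Variable R : realType.

Definition is_pmf (O : finType) (p : {ffun O -> R}) : Prop :=
  (forall o, 0 <= p o) /\ \sum_(o : O) p o = 1.

Definition dist (O T : finType) (p : {ffun O -> R}) (Z : O -> T) (t : T) : R :=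
  \sum_(o : O | Z o == t) p o.

(* Shannon entropy (natural logarithm; convention 0 log 0 = 0, since ln 0 = 0). *)
Definition entropy (O T : finType) (p : {ffun O -> R}) (Z : O -> T) : R :=
  - \sum_(t : T) dist p Z t * ln (dist p Z t).

Definition cond_entropy (O T U : finType) (p : {ffun O -> R})
  (Z : O -> T) (W : O -> U) : R :=
  entropy p (fun o => (Z o, W o)) - entropy p W.

Definition cond_pmf (O T U : finType) (p : {ffun O -> R})
  (Z : O -> T) (W : O -> U) (z : T) (w : U) : R :=
  dist p (fun o => (Z o, W o)) (z, w) / dist p W w.
End Info.

Section Graph.
Variable N : nat.

Definition restr (A : 'I_N -> finType) (S : {set 'I_N})
  (x : {dffun forall j : 'I_N, A j}) : {dffun forall j : 'I_N, option (A j)} :=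
  [ffun j => if j \in S then Some (x j) else None].

Definition nbhd (e : rel 'I_N) (i : 'I_N) : {set 'I_N} := [set j | e i j].

Definition simple_graph (e : rel 'I_N) : Prop := symmetric e /\ irreflexive e.

(* Chordal: every cycle of length >= 4 (distinct vertices) has a chord,
   i.e. every induced cycle has length 3. *)
Definition chordal (e : rel 'I_N) : Prop :=
  forall s : seq 'I_N, uniq s -> (4 <= size s)%N -> cycle e s ->
  exists x y : 'I_N, [/\ x \in s, y \in s, e x y,
     ((index x s).+1 < index y s)%N
   & ~~ ((index x s == 0%N) && (index y s == (size s).-1))].
  
(* X is a Markov random field on (V, e) w.r.t. pmf p:
   p_{X_i | X_{V \ i}} = p_{X_i | X_{N_i}} (wherever the former is defined). *)
Definition markov_random_field (R : realType) (A : 'I_N -> finType)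
  (p : {ffun {dffun forall j : 'I_N, A j} -> R}) (e : rel 'I_N) : Prop :=
  forall (i : 'I_N) (x : {dffun forall j : 'I_N, A j}),
    0 < dist p (restr [set~ i]) (restr [set~ i] x) ->
    cond_pmf p (fun y => y i) (restr [set~ i]) (x i) (restr [set~ i] x)
    = cond_pmf p (fun y => y i) (restr (nbhd e i)) (x i) (restr (nbhd e i) x).
End Graph.

From mathcomp Require Import all_boot all_order all_algebra.
From mathcomp Require Import reals exp.
Import Order.TTheory GRing.Theory Num.Theory.
Local Open Scope ring_scope.

(* If [H(Y) = H(X)] then [X] is a function of [Y] on the support of [p]. Given
   two support points [x], [x'] that agree in [g_i(x_i)] and on [N_i], the
   Markov property shows that the configuration equal to [x] at [i] and to [x']
   elsewhere also has positive mass; it has the same image as [x'] under [g],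
   hence equals [x'], so [x_i = x'_i]. Conversely, if every [X_(v_i)] is
   determined by [Y_(v_i)] and earlier coordinates, then induction along [v]
   recovers all of [X] from [Y], so [H(X | Y) = 0]. *)

Set Implicit Arguments.
Unset Strict Implicit.

Section Entropy.
Variables (R : realType) (O : finType) (p : {ffun O -> R}).
Hypothesis p_ge0 : forall o, 0 <= p o.

Definition determined (T U : finType) (Z : O -> T) (W : O -> U) : Prop :=
  forall o o', 0 < p o -> 0 < p o' -> W o = W o' -> Z o = Z o'.

Lemma entropyE (T : finType) (Z : O -> T) :
  entropy p Z = - \sum_o p o * ln (dist p Z (Z o)).
Proof.
congr (- _); rewrite (partition_big Z predT) //=; apply: eq_bigr => t _.
by rewrite /dist big_distrl /=; apply: eq_big => // o /eqP ->.
Qed.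

Lemma dist_atom_ge (T : finType) (Z : O -> T) o : p o <= dist p Z (Z o).
Proof. by rewrite /dist (bigD1 o) //= lerDl sumr_ge0. Qed.

Lemma dist_atom_inj (T : finType) (Z : O -> T) o :
  (forall o', Z o' = Z o -> o' = o) -> dist p Z (Z o) = p o.
Proof. by move=> Zo; rewrite /dist (big_pred1 o) // => o'; apply/eqP/eqP=> [/Zo|->]. Qed.

Lemma entropy_eq_on_support (T T' : finType) (Z : O -> T) (Z' : O -> T') :
  (forall o o', 0 < p o -> 0 < p o' -> (Z o == Z o') = (Z' o == Z' o')) ->
  entropy p Z = entropy p Z'.
Proof.
move=> ZZ'; rewrite !entropyE; congr (- _); apply: eq_bigr => o _.
have := p_ge0 o; rewrite le_eqVlt => /predU1P [<-|po]; first by rewrite !mul0r.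
congr (_ * ln _); rewrite /dist [LHS]big_mkcond [RHS]big_mkcond.
apply: eq_bigr => o' _.
have := p_ge0 o'; rewrite le_eqVlt => /predU1P [<-|po']; first by rewrite !if_same.
by rewrite ZZ'.
Qed.

Lemma cond_entropyE (T U : finType) (Z : O -> T) (W : O -> U) :
  cond_entropy p Z W = \sum_o p o *
    (ln (dist p W (W o)) - ln (dist p (fun o => (Z o, W o)) (Z o, W o))).
Proof.
rewrite /cond_entropy !entropyE opprK addrC -sumrB.
by apply: eq_bigr => o _; rewrite mulrBr.
Qed.

Lemma dist_pairE (T U : finType) (Z : O -> T) (W : O -> U) o :
  dist p W (W o) = dist p (fun o => (Z o, W o)) (Z o, W o)
                   + \sum_(o' | (W o' == W o) && (Z o' != Z o)) p o'.
Proof.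
rewrite /dist (bigID (fun o' => Z o' == Z o)) /=; congr (_ + _).
by apply: eq_bigl => o'; rewrite xpair_eqE andbC.
Qed.

Lemma cond_entropy_eq0P (T U : finType) (Z : O -> T) (W : O -> U) :
  cond_entropy p Z W = 0 <-> determined Z W.
Proof.
set dW := fun o => dist p W (W o).
set dZW := fun o => dist p (fun o => (Z o, W o)) (Z o, W o).
have dZW_gt0 o : 0 < p o -> 0 < dZW o by move=> po; exact: lt_le_trans (dist_atom_ge _ _).
have dZW_le o : dZW o <= dW o by rewrite /dW (dist_pairE Z) lerDl sumr_ge0.
have dW_gt0 o : 0 < p o -> 0 < dW o by move=> /dZW_gt0/lt_le_trans; apply.
split=> [|ZW]; last first.
  apply/eqP; rewrite subr_eq0; apply/eqP/entropy_eq_on_support => o o' po po'.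
  rewrite xpair_eqE; have [Wo|] := W o =P W o'; last by rewrite andbF.
  by rewrite (ZW _ _ po po' Wo) !eqxx.
have term_ge0 o : true -> 0 <= p o * (ln (dW o) - ln (dZW o)).
  move=> _; have := p_ge0 o; rewrite le_eqVlt => /predU1P [<-|po]; first by rewrite mul0r.
  by rewrite mulr_ge0 ?(ltW po) // subr_ge0 ler_ln ?posrE ?dZW_gt0 ?dW_gt0.
(* A null sum of the nonnegative [p o * ln (dW o / dZW o)] leaves no mass with
   the same [W] and another [Z] next to a support point. *)
rewrite cond_entropyE => /(psumr_eq0P term_ge0) terms0 o o' po po' Wo.
have /eqP := terms0 o isT; rewrite mulf_eq0 (gt_eqF po) subr_eq0 /= => /eqP.
move/ln_inj; rewrite !posrE => /(_ (dW_gt0 _ po) (dZW_gt0 _ po)).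
rewrite /dW (dist_pairE Z) -[RHS]addr0 => /addrI /psumr_eq0P rest0.
apply/eqP; apply: contraT => Zo.
have := rest0 (fun o' _ => p_ge0 o') o'; rewrite -Wo eqxx eq_sym Zo.
by move=> /(_ isT) /eqP; rewrite (gt_eqF po').
Qed.

Lemma cond_entropy_comp (T U : finType) (Z : O -> T) (f : T -> U) :
  cond_entropy p Z (fun o => f (Z o)) = entropy p Z - entropy p (fun o => f (Z o)).
Proof.
congr (_ - _); apply: entropy_eq_on_support => o o' _ _.
by rewrite xpair_eqE; case: eqP => [->|]; rewrite ?eqxx ?andbF.
Qed.

Lemma entropy_compP (T U : finType) (Z : O -> T) (f : T -> U) :
  entropy p (fun o => f (Z o)) = entropy p Z <-> determined Z (fun o => f (Z o)).
Proof.
rewrite -cond_entropy_eq0P cond_entropy_comp.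
by split=> [->|/eqP]; rewrite ?subrr // subr_eq0 => /eqP.
Qed.
End Entropy.

Section Configurations.
Variables (N : nat) (A : 'I_N -> finType).
Local Notation config := {dffun forall j : 'I_N, A j}.

Definition splice (i : 'I_N) (x x' : config) : config :=
  finfun (fun j => if j == i then x j else x' j).

Lemma splice_at i x x' : splice i x x' i = x i.
Proof. by rewrite ffunE eqxx. Qed.

Lemma restr_splice (S : {set 'I_N}) i x x' :
  i \notin S -> restr S (splice i x x') = restr S x'.
Proof.
move=> iS; apply/ffunP => j; rewrite !ffunE.
by case: ifP => // jS; case: eqP jS iS => // -> ->.
Qed.

Lemma coord_restrC1_inj i (x y : config) :
  (y i, restr [set~ i] y) = (x i, restr [set~ i] x) -> y = x.
Proof.
case=> yx /ffunP rxy; apply/ffunP => j; have [-> //|ji] := eqVneq j i.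
by have := rxy j; rewrite !ffunE in_setC1 ji => -[].
Qed.

Definition map_config (B : 'I_N -> finType) (g : forall i, A i -> B i) (x : config) :
  {dffun forall j : 'I_N, B j} := [ffun j => g j (x j)].

Variables (R : realType) (p : {ffun config -> R}).
Hypothesis p_ge0 : forall x, 0 <= p x.

Lemma dist_coord_restrC1 i (x : config) :
  dist p (fun y => (y i, restr [set~ i] y)) (x i, restr [set~ i] x) = p x.
Proof. by apply: dist_atom_inj => y /coord_restrC1_inj. Qed.

Section MarkovRandomField.
Variable e : rel 'I_N.
Hypotheses (e_irr : irreflexive e) (mrf : markov_random_field p e).

Lemma splice_support i (x x' : config) :
  0 < p x -> 0 < p x' -> restr (nbhd e i) x = restr (nbhd e i) x' ->
  0 < p (splice i x x').
Proof.
(* [p z = p(x'_(-i)) * p(x_i | x_(N_i))] by the Markov property, as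
   [z_(-i) = x'_(-i)] and [z_(N_i) = x_(N_i)]. *)
move=> px px' xN; set z := splice i x x'.
have zC1 : restr [set~ i] z = restr [set~ i] x' by rewrite restr_splice ?setC11.
have zN : restr (nbhd e i) z = restr (nbhd e i) x by rewrite restr_splice ?inE ?e_irr.
have zC1_gt0 : 0 < dist p (restr [set~ i]) (restr [set~ i] z).
  by rewrite zC1; exact: lt_le_trans px' (dist_atom_ge _ _ _).
have := mrf zC1_gt0; rewrite /cond_pmf dist_coord_restrC1 splice_at zN => pz.
have xN_gt0 : 0 < cond_pmf p (fun y => y i) (restr (nbhd e i)) (x i) (restr (nbhd e i) x).
  by rewrite divr_gt0 // (lt_le_trans px) // dist_atom_ge.
rewrite lt0r p_ge0 andbT; apply/eqP => pz0.
by move: xN_gt0; rewrite /cond_pmf -pz pz0 mul0r ltxx.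
Qed.

Lemma determined_local (B : 'I_N -> finType) (g : forall i, A i -> B i) i :
  determined p (fun x : config => x) (map_config g) ->
  determined p (fun x : config => x i) (fun x => (g i (x i), restr (nbhd e i) x)).
Proof.
move=> Xg x x' px px' [gx xN].
suff <- : splice i x x' = x' by rewrite splice_at.
apply: (Xg _ _ (splice_support px px' xN) px').
by apply/ffunP => j; rewrite !ffunE; have [->|] := eqVneq j i; rewrite ?gx.
Qed.
End MarkovRandomField.

Lemma determined_sequentially (B : 'I_N -> finType) (g : forall i, A i -> B i)
    (v w : 'I_N -> 'I_N) (S : 'I_N -> {set 'I_N}) :
  cancel w v -> (forall i, S i \subset [set v k | k : 'I_N & (k < i)%N]) ->
  (forall i, determined p (fun x : config => x (v i))
                          (fun x => (g (v i) (x (v i)), restr (S i) x))) ->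
  determined p (fun x : config => x) (map_config g).
Proof.
move=> wK Sv Sdet x x' px px' /ffunP gxx'.
suff prefix n (k : 'I_N) : (k < n)%N -> x (v k) = x' (v k).
  by apply/ffunP => j; rewrite -[j]wK (prefix N).
elim: n k => [//|n IHn] k; rewrite ltnS leq_eqVlt => /predU1P [kn|]; last exact: IHn.
apply: Sdet px px' _; congr (_, _); first by have := gxx' (v k); rewrite !ffunE.
apply/ffunP => j; rewrite !ffunE; case: ifP => // /(subsetP (Sv k)) /imsetP [k' + ->].
by rewrite inE kn => /IHn ->.
Qed.
End Configurations.

Unset Implicit Arguments.

Theorem proposition4 (R : realType) (N : nat) (e : rel 'I_N)
  (A B : 'I_N -> finType) (p : {ffun {dffun forall j : 'I_N, A j} -> R})
  (g : forall i : 'I_N, A i -> B i) :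
  simple_graph e -> is_pmf p -> markov_random_field p e ->
  let X := fun x : {dffun forall j : 'I_N, A j} => x in
  let Y := fun x : {dffun forall j : 'I_N, A j} =>
             [ffun i => g i (x i)] : {dffun forall j : 'I_N, B j} in
  (* (i) *)
  (entropy p Y = entropy p X ->
     forall i : 'I_N,
       cond_entropy p (fun x => x i) (fun x => (g i (x i), restr (nbhd e i) x)) = 0)
  /\
  (* (ii) *)
  (chordal e ->
   forall v : 'I_N -> 'I_N, bijective v ->
   (forall i : 'I_N,
      let Av := nbhd e (v i) :&: [set v k | k : 'I_N & (k < i)%N] in
      cond_entropy p (fun x => x (v i)) (fun x => (g (v i) (x (v i)), restr Av x)) = 0) ->
   entropy p Y = entropy p X).
Proof.
move=> [_ e_irr] [p_ge0 _] mrf X Y.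
have HY : entropy p Y = entropy p X <-> determined p X Y := entropy_compP p_ge0 X Y.
split=> [/HY XY i | _ v [w _ wK] Avdet].
  by apply/(cond_entropy_eq0P p_ge0); apply: determined_local.
apply/HY; apply: (determined_sequentially wK (fun i => subsetIr _ _)).
by move=> i; apply/(cond_entropy_eq0P p_ge0); exact: Avdet.
Qed.
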